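(* For $n\ge 2$ let $G_n$ be the intersection graph of the $\binom{n}{2}$ closed intervals $[i,j]$, $1\le i<j\le n$. Then $c(G_n)\le p(G_n)\le \log n+1$, where $\log$ is base $2$.
   Context: A comparability graph is a graph admitting a transitive orientation. $p(G)$ is the minimum number $m$ such that $E(G)$ is the union of the edge sets of $m$ pairwise edge-disjoint comparability subgraphs of $G$; $c(G)$ is the minimum number of comparability subgraphs of $G$ (not necessarily edge-disjoint) whose edge sets cover $E(G)$. *)

From Stdlib Require Import Reals.
From mathcomp Require Import all_boot.

Set Implicit Arguments.
Unset Strict Implicit.
Unset Printing Implicit Defensive.

Section Graphs.
Variable T : finType.

Definition edges (e : rel T) : {set {set T}} :=
  [set [set xy.1; xy.2] | xy : T * T & (xy.1 != xy.2) && e xy.1 xy.2].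

Definition trans_orientation (F : {set {set T}}) (O : {set T * T}) : bool :=
  [&& [forall u, forall v, ((u, v) \in O) ==> ((u != v) && ([set u; v] \in F))],
      [forall u, forall v, ((u != v) && ([set u; v] \in F)) ==>
                           (((u, v) \in O) (+) ((v, u) \in O))] &
      [forall u, forall v, forall w,
         ((u, v) \in O) && ((v, w) \in O) ==> ((u, w) \in O)]].

Definition comparability (F : {set {set T}}) : bool :=
  [exists O : {set T * T}, trans_orientation F O].

Definition comp_subgraph (e : rel T) (F : {set {set T}}) : bool :=
  (F \subset edges e) && comparability F.

Definition has_comp_partition (e : rel T) (m : nat) : bool :=
  [exists Fs : {ffun 'I_m -> {set {set T}}},
    [&& [forall i, comp_subgraph e (Fs i)],
        [forall i, forall j, (i != j) ==> [disjoint Fs i & Fs j]] &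
        (\bigcup_(i < m) Fs i == edges e)]].

Definition has_comp_cover (e : rel T) (m : nat) : bool :=
  [exists Fs : {ffun 'I_m -> {set {set T}}},
    [forall i, comp_subgraph e (Fs i)] &&
    (\bigcup_(i < m) Fs i == edges e)].

(* Existence: each edge alone is a comparability subgraph. *)
Lemma single_comparability (u v : T) : u != v -> comparability [set [set u; v]].
Proof.
move=> uv; apply/existsP; exists [set (u, v)].
apply/and3P; split.
- apply/forallP=> x; apply/forallP=> y; apply/implyP.
  rewrite in_set1 => /eqP [-> ->]; by rewrite uv in_set1 eqxx.
- apply/forallP=> x; apply/forallP=> y; apply/implyP=> /andP [xy].
  rewrite in_set1 => /eqP E.
  have: x \in [set u; v] by rewrite -E !inE eqxx.
  have: y \in [set u; v] by rewrite -E !inE eqxx orbT.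
  rewrite !inE !xpair_eqE => Hy Hx.
  have vu : (v == u) = false by rewrite eq_sym (negbTE uv).
  case/orP: Hx => /eqP Hx; case/orP: Hy => /eqP Hy; subst x y;
    by rewrite ?eqxx ?vu ?(negbTE uv) in xy *.
- apply/forallP=> x; apply/forallP=> y; apply/forallP=> z; apply/implyP.
  rewrite !in_set1 !xpair_eqE => /andP [/andP [/eqP -> /eqP ->] /andP [/eqP E _]].
  by rewrite E eqxx in uv.
Qed.

Lemma has_comp_partition_ex (e : rel T) : exists m, has_comp_partition e m.
Proof.
exists #|edges e|; apply/existsP.
exists [ffun i => [set enum_val i]]; apply/and3P; split.
- apply/forallP=> i; rewrite ffunE; apply/andP; split.
    by rewrite sub1set enum_valP.
  have := enum_valP i; case/imsetP=> [[x y]] /=.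
  by rewrite inE /= => /andP [xy _] ->; apply: single_comparability.
- apply/forallP=> i; apply/forallP=> j; apply/implyP=> ij.
  rewrite !ffunE disjoints1 in_set1; apply: contra ij => /eqP.
  by move/enum_val_inj ->.
- apply/eqP/setP=> E; apply/bigcupP/idP.
    by case=> i _; rewrite ffunE in_set1 => /eqP ->; apply: enum_valP.
  move=> EE; exists (enum_rank_in EE E) => //.
  by rewrite ffunE enum_rankK_in // in_set1.
Qed.

Lemma has_comp_cover_ex (e : rel T) : exists m, has_comp_cover e m.
Proof.
case: (has_comp_partition_ex e) => m /existsP [Fs /and3P [H1 _ H3]].
by exists m; apply/existsP; exists Fs; rewrite H1 H3.
Qed.

Definition pG (e : rel T) : nat := ex_minn (has_comp_partition_ex e).

Definition cG (e : rel T) : nat := ex_minn (has_comp_cover_ex e).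

End Graphs.

(* G_n: vertices are the pairs (i,j) with 0 <= i < j < n, standing for the
   closed intervals [i+1, j+1] (1 <= i+1 < j+1 <= n); two distinct intervals
   are adjacent iff they intersect. *)
Definition interval_vertex (n : nat) := {ij : 'I_n * 'I_n | ij.1 < ij.2}.

Definition interval_adj (n : nat) : rel (interval_vertex n) :=
  fun a b => maxn (val a).1 (val b).1 <= minn (val a).2 (val b).2.
Arguments interval_adj n : clear implicits.

(* Give the interval [i, j] the level l of the leading binary digit in which
   i and j differ, so l <= floor(log2 n).  Then [i, j] contains the midpoint of
   its dyadic block of length 2^(l+1), and two intervals of the same level meet
   iff they lie in the same block: every level induces a disjoint union of
   cliques.  Put all edges inside a level into class 0 and every other edge
   into the class of the higher level of its ends.  Class 0 is transitively
   oriented inside each clique; the class of a level l > 0 is bipartite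
   between level l and the lower levels, hence oriented upwards.  This gives
   floor(log2 n) + 1 edge-disjoint comparability subgraphs. *)

From Stdlib Require Import Reals Lra.
From mathcomp Require Import all_boot zify.

Set Implicit Arguments.
Unset Strict Implicit.
Unset Printing Implicit Defensive.

Section CompPartitions.
Variable T : finType.
Implicit Types (e E : rel T) (u v w x y : T).

Lemma pG_le e m : has_comp_partition e m -> pG e <= m.
Proof. by rewrite /pG; case: ex_minnP => p _; apply. Qed.

Lemma cG_le_pG e : cG e <= pG e.
Proof.
rewrite /pG; case: ex_minnP => p /existsP[Fs /and3P[Fs_comp _ Fs_cover]] _.
rewrite /cG; case: ex_minnP => c _; apply.
by apply/existsP; exists Fs; rewrite Fs_comp Fs_cover.
Qed.

Lemma eq_set2 u v x y :
  [set u; v] = [set x; y] -> (u, v) = (x, y) \/ (u, v) = (y, x).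
Proof.
move=> uv_xy.
have: u \in [set x; y] by rewrite -uv_xy set21.
have: v \in [set x; y] by rewrite -uv_xy set22.
have: x \in [set u; v] by rewrite uv_xy set21.
have: y \in [set u; v] by rewrite uv_xy set22.
by rewrite !inE => /pred2P[]? /pred2P[]? /pred2P[]? /pred2P[]?; subst; auto.
Qed.

Lemma mem_edges E u v :
  symmetric E -> ([set u; v] \in edges E) = (u != v) && E u v.
Proof.
move=> Esym; apply/imsetP/andP => [[[x y]] | [uv Euv]]; last first.
  by exists (u, v); rewrite // inE uv.
rewrite inE /= => /andP[xy Exy] /eq_set2[] [-> ->]; first by rewrite xy.
by rewrite eq_sym xy Esym.
Qed.

Lemma edgesS E E' : subrel E E' -> edges E \subset edges E'.
Proof.
move=> EE'; apply/subsetP => F /imsetP[xy]; rewrite inE => /andP[xy_neq /EE' E'xy] ->.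
by apply/imsetP; exists xy; rewrite // inE xy_neq.
Qed.

Lemma comparability_edges_ord E (f : T -> nat) :
  symmetric E -> injective f ->
  (forall u v w, f u < f v < f w -> E u v -> E v w -> E u w) ->
  comparability (edges E).
Proof.
move=> Esym f_inj Emono; apply/existsP.
exists [set xy | [&& xy.1 != xy.2, E xy.1 xy.2 & f xy.1 < f xy.2]].
apply/and3P; split; apply/forallP => u; apply/forallP => v.
- by apply/implyP; rewrite inE mem_edges // => /and3P[-> -> _].
- apply/implyP; rewrite mem_edges // => /and3P[uv _ Euv].
  rewrite !inE /= uv eq_sym uv Euv Esym Euv /=.
  have fuv : f u != f v by apply: contra uv => /eqP/f_inj->.
  by case: ltngtP fuv.
- apply/forallP => w; apply/implyP; rewrite !inE /=.
  case/andP => /and3P[_ Euv fuv] /and3P[_ Evw fvw].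
  have fuw := ltn_trans fuv fvw.
  rewrite fuw (Emono u v w) ?fuv ?andbT //.
  by apply: contraTneq fuw => ->; rewrite ltnn.
Qed.

Lemma comp_partition_of_classes e m (c : T -> T -> 'I_m) :
  symmetric e -> (forall u v, c u v = c v u) ->
  (forall i, comparability (edges [rel u v | e u v && (c u v == i)])) ->
  has_comp_partition e m.
Proof.
move=> esym cC class_comp.
pose class i := [rel u v | e u v && (c u v == i)].
have class_sym i : symmetric (class i) by move=> u v; rewrite /= esym cC.
have class_sub i : edges (class i) \subset edges e by apply: edgesS => u v /andP[].
apply/existsP; exists [ffun i => edges (class i)]; apply/and3P; split.
- by apply/forallP => i; rewrite ffunE /comp_subgraph class_sub class_comp.
- apply/forallP => i; apply/forallP => j; apply/implyP => ij; rewrite !ffunE.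
  rewrite disjoints_subset; apply/subsetP => F /imsetP[[u v]].
  rewrite inE /= => /andP[uv /andP[_ /eqP ci]] ->.
  by rewrite inE mem_edges //= ci (negbTE ij) !andbF.
- apply/eqP/setP => F; apply/bigcupP/idP => [[i _] | ].
    by rewrite ffunE; apply/subsetP.
  case/imsetP => [[u v]]; rewrite inE /= => /andP[uv euv] ->.
  by exists (c u v); rewrite // ffunE mem_edges //= uv euv eqxx.
Qed.

End CompPartitions.

Section Levels.
Variables (T : finType) (e : rel T) (k : nat) (lvl : T -> 'I_k.+1).
Hypothesis e_sym : symmetric e.
Hypothesis e_trans_lvl : forall u v w,
  lvl u = lvl v -> lvl v = lvl w -> e u v -> e v w -> e u w.

Definition edge_level u v : 'I_k.+1 :=
  inord (if lvl u == lvl v :> nat then 0 else maxn (lvl u) (lvl v)).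

Lemma edge_levelE u v :
  edge_level u v = (if lvl u == lvl v :> nat then 0 else maxn (lvl u) (lvl v)) :> nat.
Proof. by rewrite inordK //; case: ifP => // _; rewrite gtn_max !ltn_ord. Qed.

Lemma edge_levelC u v : edge_level u v = edge_level v u.
Proof. by rewrite /edge_level eq_sym maxnC. Qed.

Definition lvl_rank u := lvl u * #|T| + enum_rank u.

Lemma lvl_rank_inj : injective lvl_rank.
Proof.
move=> u v /(congr1 (modn^~ #|T|)); rewrite /lvl_rank !modnMDl !modn_small //.
by move=> /val_inj/enum_rank_inj.
Qed.

Lemma lvl_rank_mono u v : lvl_rank u < lvl_rank v -> lvl u <= lvl v.
Proof.
have rank_lt : enum_rank v < #|T| := ltn_ord _.
move=> ruv; rewrite leqNgt; apply/negP => /leq_mul/(_ (leqnn #|T|)).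
by move: ruv; rewrite /lvl_rank mulSn; lia.
Qed.

Lemma edge_level_comparability i :
  comparability (edges [rel u v | e u v && (edge_level u v == i)]).
Proof.
apply: (@comparability_edges_ord _ _ lvl_rank) => [u v | | u v w].
- by rewrite /= e_sym edge_levelC.
- exact: lvl_rank_inj.
case/andP => /lvl_rank_mono luv /lvl_rank_mono lvw.
case/andP => euv /eqP <- /andP[evw /eqP /(congr1 val) /=]; rewrite !edge_levelE.
case: ltngtP luv => // [luv _ | /val_inj luv _];
  case: ltngtP lvw => // [lvw _ | /val_inj lvw _]; try lia.
by move=> _; rewrite (e_trans_lvl luv lvw euv evw) /edge_level luv lvw eqxx.
Qed.

Lemma has_comp_partition_levels : has_comp_partition e k.+1.
Proof.
apply: (@comp_partition_of_classes _ _ _ edge_level e_sym edge_levelC).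
exact: edge_level_comparability.
Qed.

End Levels.

(* Both intervals contain the midpoint of their dyadic block of length 2q;
   they meet iff the blocks coincide. *)
Lemma straddling_meetE q i j i' j' :
  i %/ q < j %/ q -> i %/ q %/ 2 = j %/ q %/ 2 ->
  i' %/ q < j' %/ q -> i' %/ q %/ 2 = j' %/ q %/ 2 ->
  (i <= j') && (i' <= j) = (i %/ q %/ 2 == i' %/ q %/ 2).
Proof.
have div_mono a b : a %/ q < b %/ q -> a <= b.
  move=> ab; rewrite leqNgt; apply: contraTN ab.
  by move=> /ltnW/(leq_div2r q); rewrite leqNgt.
move=> hij bij hij' bij'; apply/andP/eqP => [[ij' i'j] | b].
- by move: (leq_div2r q ij') (leq_div2r q i'j); lia.
- by split; apply: div_mono; lia.
Qed.

Section Intervals.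
Variable n : nat.
Implicit Types x y z : interval_vertex n.

Lemma interval_adj_sym : symmetric (interval_adj n).
Proof. by move=> x y; rewrite /interval_adj maxnC minnC. Qed.

Lemma interval_adjE x y :
  interval_adj n x y = ((val x).1 <= (val y).2) && ((val y).1 <= (val x).2).
Proof.
rewrite /interval_adj geq_max !leq_min (ltnW (valP x)) (ltnW (valP y)) /=.
by rewrite andbT.
Qed.

Definition interval_level x : 'I_(trunc_log 2 n).+1 :=
  [arg max_(l > ord0 | (val x).1 %/ 2 ^ l < (val x).2 %/ 2 ^ l) (l : nat)].

Lemma interval_levelP x (q := 2 ^ interval_level x) :
  (val x).1 %/ q < (val x).2 %/ q /\ (val x).1 %/ q %/ 2 = (val x).2 %/ q %/ 2.
Proof.
rewrite {}/q /interval_level; case: arg_maxnP => [|l lt_l l_max].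
  by rewrite expn0 !divn1; exact: (valP x).
split=> //; rewrite -!divnMA -expnSr.
apply/eqP; rewrite eqn_leq leq_div2r ?(ltnW (valP x)) //= leqNgt.
case: (ltnP l (trunc_log 2 n)) => [l_lt | l_ge].
  by apply/negP => /(l_max (@Ordinal (trunc_log 2 n).+1 l.+1 l_lt)) /=; rewrite ltnn.
have lK : l = trunc_log 2 n :> nat by apply/eqP; rewrite eqn_leq l_ge -ltnS ltn_ord.
have jn : (val x).2 < 2 ^ l.+1.
  by rewrite lK (leq_trans (ltn_ord _)) // ltnW // trunc_log_ltn.
by rewrite !divn_small // (ltn_trans (valP x)).
Qed.

Lemma interval_adj_trans_level x y z :
  interval_level x = interval_level y -> interval_level y = interval_level z ->
  interval_adj n x y -> interval_adj n y z -> interval_adj n x z.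
Proof.
move=> lxy lyz; have [hx bx] := interval_levelP x.
have [hy b_y] := interval_levelP y; have [hz bz] := interval_levelP z.
rewrite -lxy in hy b_y; rewrite -lyz -lxy in hz bz.
rewrite !interval_adjE (straddling_meetE hx bx hy b_y).
rewrite (straddling_meetE hy b_y hz bz) (straddling_meetE hx bx hz bz).
by move=> /eqP-> /eqP->.
Qed.

End Intervals.

Section LogBound.
Local Open Scope R_scope.

Lemma INR_expn m k : INR (m ^ k) = INR m ^ k.
Proof. by elim: k => [|k IHk] //; rewrite expnS mult_INR IHk. Qed.

Lemma trunc_log2_le_log n : (0 < n)%N -> INR (trunc_log 2 n) <= ln (INR n) / ln (INR 2).
Proof.
move=> n_gt0; have ln2_gt0 : 0 < ln (INR 2).
  by rewrite -ln_1; apply: ln_increasing; simpl; lra.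
have two_pow_le : INR 2 ^ trunc_log 2 n <= INR n.
  by rewrite -INR_expn; apply/le_INR/leP/trunc_logP.
have : INR (trunc_log 2 n) * ln (INR 2) <= ln (INR n).
  rewrite -ln_pow; last by simpl; lra.
  case: (Rle_lt_or_eq_dec _ _ two_pow_le) => [lt_pow | ->]; last exact: Rle_refl.
  by apply/Rlt_le/ln_increasing => //; apply: pow_lt; simpl; lra.
move=> h; apply: (Rmult_le_reg_r (ln (INR 2))) => //.
by rewrite /Rdiv Rmult_assoc Rinv_l ?Rmult_1_r //; lra.
Qed.

End LogBound.

Theorem theorem8 (n : nat) (hn : 2 <= n) :
  cG (interval_adj n) <= pG (interval_adj n) /\
  Rle (INR (pG (interval_adj n))) (Rplus (Rdiv (ln (INR n)) (ln (INR 2))) (INR 1)).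
Proof.
split; first exact: cG_le_pG.
have partition :=
  has_comp_partition_levels (@interval_adj_sym n) (@interval_adj_trans_level n).
apply: (Rle_trans _ (INR (trunc_log 2 n).+1)).
  exact/le_INR/leP/(pG_le partition).
by rewrite S_INR; apply/Rplus_le_compat_r/trunc_log2_le_log/ltnW.
Qed.
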